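(* Assume additionally that $f(\mathbf x,\cdot)$ is convex for every $\mathbf x\in\mathcal X$. Let $\{\mathbf y_k(\cdot,\cdot)\}_{k\ge0}$ be a sequence of maps $\mathcal X\times\mathcal Y\to\mathbb R^m$ such that $\mathbf y_k(\mathbf x,\mathbf z)\in\mathcal Y$ for all $k,\mathbf x,\mathbf z$, and $\mathbf y_k(\mathbf x,\mathbf z)=\mathbf z$ for all $k\ge0$, $\mathbf x\in\mathcal X$, $\mathbf z\in\mathcal S(\mathbf x)$. Suppose that either (a) for every $\epsilon>0$ there is $k(\epsilon)>0$ such that for all $K>k(\epsilon)$, $\sup_{\mathbf x\in\mathcal X,\mathbf z\in\mathcal Y}\{f(\mathbf x,\mathbf y_K(\mathbf x,\mathbf z))-f^*(\mathbf x)\}\le\epsilon$; or (b) there is $\alpha>0$ such that for every $\epsilon>0$ there is $k(\epsilon)>0$ such that for all $K>k(\epsilon)$, $\sup_{\mathbf x\in\mathcal X,\mathbf z\in\mathcal Y}\|\mathcal R_\alpha(\mathbf x,\mathbf y_K(\mathbf x,\mathbf z))\|\le\epsilon$. For $K\ge1$ let $\phi_K(\mathbf x,\mathbf z):=F(\mathbf x,\mathbf y_K(\mathbf x,\mathbf z))$ and let $(\mathbf x_K,\mathbf z_K)\in\arg\min_{\mathbf x\in\mathcal X,\mathbf z\in\mathcal Y}\phi_K(\mathbf x,\mathbf z)$ (assumed to exist). Then: (1) every limit point $\bar{\mathbf x}$ of $\{\mathbf x_K\}$ satisfies $\bar{\mathbf x}\in\arg\min_{\mathbf x\in\mathcal X}\varphi(\mathbf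 x)$; (2) $\inf_{\mathbf x\in\mathcal X,\mathbf z\in\mathcal Y}\phi_K(\mathbf x,\mathbf z)\to\inf_{\mathbf x\in\mathcal X}\varphi(\mathbf x)$ as $K\to\infty$.
   Context: Let $F,f:\mathbb R^n\times\mathbb R^m\to\mathbb R$ and $\mathcal X\subset\mathbb R^n$, $\mathcal Y\subset\mathbb R^m$. Standing assumptions: (i) $F$ and $f$ are continuous; (ii) $f$ is differentiable, $\nabla f$ is continuous, and there is $L_f>0$ such that for every $\mathbf x\in\mathcal X$ the map $\mathbf y\mapsto\nabla_{\mathbf y}f(\mathbf x,\mathbf y)$ is $L_f$-Lipschitz; (iii) $\mathcal X$ and $\mathcal Y$ are nonempty convex compact sets; (iv) $\mathcal S(\mathbf x):=\arg\min_{\mathbf y\in\mathcal Y}f(\mathbf x,\mathbf y)$ is nonempty for every $\mathbf x\in\mathcal X$. Notation: $f^*(\mathbf x):=\min_{\mathbf y\in\mathcal Y}f(\mathbf x,\mathbf y)$; $\varphi(\mathbf x):=\inf_{\mathbf y\in\mathcal S(\mathbf x)}F(\mathbf x,\mathbf y)$; $\mathtt{Proj}_{\mathcal Y}$ is Euclidean projection onto $\mathcal Y$; for $\alpha>0$, $\mathcal R_\alpha(\mathbf x,\mathbf y):=\mathbf y-\mathtt{Proj}_{\mathcal Y}(\mathbf y-\alpha\nabla_{\mathbf y}f(\mathbf x,\mathbf y))$. *)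

From HB Require Import structures.
From mathcomp Require Import all_boot all_order all_algebra.
From mathcomp Require Import all_classical all_reals all_analysis.
Set Implicit Arguments. Unset Strict Implicit. Unset Printing Implicit Defensive.
Import Order.TTheory GRing.Theory Num.Theory.
Import numFieldNormedType.Exports.
Local Open Scope classical_set_scope.
Local Open Scope ring_scope.

Section Defs.
Variable R : realType.

Definition enorm (m : nat) (v : 'rV[R]_m) : R :=
  Num.sqrt (\sum_(i < m) v 0 i ^+ 2).

(* Euclidean projection onto C (a point of C minimising the Euclidean
   distance to v; well defined/unique when C is nonempty convex compact) *)
Definition proj (m : nat) (C : set 'rV[R]_m) (v : 'rV[R]_m) : 'rV[R]_m :=
  xget 0 [set p | C p /\ forall q, C q -> enorm (p - v) <= enorm (q - v)].

Definition grad_x (n m : nat) (f : 'rV[R]_n * 'rV[R]_m -> R)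
  (p : 'rV[R]_n * 'rV[R]_m) : 'rV[R]_n :=
  \row_(i < n) ('d f p ((delta_mx 0 i : 'rV[R]_n), (0 : 'rV[R]_m))).

Definition grad_y (n m : nat) (f : 'rV[R]_n * 'rV[R]_m -> R)
  (p : 'rV[R]_n * 'rV[R]_m) : 'rV[R]_m :=
  \row_(j < m) ('d f p ((0 : 'rV[R]_n), (delta_mx 0 j : 'rV[R]_m))).

Definition grad (n m : nat) (f : 'rV[R]_n * 'rV[R]_m -> R)
  (p : 'rV[R]_n * 'rV[R]_m) : 'rV[R]_n * 'rV[R]_m :=
  (grad_x f p, grad_y f p).

Definition Sol (n m : nat) (f : 'rV[R]_n * 'rV[R]_m -> R) (Y : set 'rV[R]_m)
  (x : 'rV[R]_n) : set 'rV[R]_m :=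
  [set y | Y y /\ forall y', Y y' -> f (x, y) <= f (x, y')].

Definition fstar (n m : nat) (f : 'rV[R]_n * 'rV[R]_m -> R) (Y : set 'rV[R]_m)
  (x : 'rV[R]_n) : R := inf [set f (x, y) | y in Y].

Definition varphi (n m : nat) (F f : 'rV[R]_n * 'rV[R]_m -> R)
  (Y : set 'rV[R]_m) (x : 'rV[R]_n) : R :=
  inf [set F (x, y) | y in Sol f Y x].

Definition resid (n m : nat) (f : 'rV[R]_n * 'rV[R]_m -> R) (Y : set 'rV[R]_m)
  (alpha : R) (x : 'rV[R]_n) (y : 'rV[R]_m) : 'rV[R]_m :=
  y - proj Y (y - alpha *: grad_y f (x, y)).

End Defs.

(* For K >= 1 the optimal value F(x_K, y_K) of the approximate problem is at
   most phi(x) for every x in X, since y_K(x, .) fixes S(x).  Conversely, by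
   compactness the pairs (x_K, y_K) have, along any subsequence, a cluster point
   (a, b), and b lies in S(a): under (a) by continuity of the optimality gap;
   under (b) because the residual vanishes, so b is the projection of
   b - alpha grad_y f(a, b) onto Y, and the variational inequality of the
   projection together with convexity of f(a, .) makes b a minimiser.  Hence
   inf phi <= phi(a) <= F(a, b) <= phi(x) for all x, which gives both claims. *)

From Pilot Require Import Defs.
From HB Require Import structures.
From mathcomp Require Import all_boot all_order all_algebra.
From mathcomp Require Import all_classical all_reals all_analysis.
From mathcomp Require Import lra ring.
Set Implicit Arguments. Unset Strict Implicit. Unset Printing Implicit Defensive.
Import Order.TTheory GRing.Theory Num.Theory.
Import numFieldNormedType.Exports.
Local Open Scope classical_set_scope.
Local Open Scope ring_scope.

Section EuclideanGeometry.
Variables (R : realType) (m : nat).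
Implicit Types (u v w q b : 'rV[R]_m) (Y : set 'rV[R]_m).

Definition dotr u v : R := \sum_(j < m) u 0 j * v 0 j.

Definition sqnorm v : R := \sum_(j < m) v 0 j ^+ 2.

Lemma sqnorm_ge0 v : 0 <= sqnorm v.
Proof. by apply: sumr_ge0 => j _; exact: sqr_ge0. Qed.

Lemma sqnorm_le0 v : sqnorm v <= 0 -> v = 0.
Proof.
move=> v0; have /eqP : sqnorm v = 0 by apply/le_anti; rewrite v0 sqnorm_ge0.
rewrite psumr_eq0 => [/allP v0j|j _]; last exact: sqr_ge0.
apply/matrixP => i j; rewrite ord1 mxE.
by have := v0j j (mem_index_enum _); rewrite /= sqrf_eq0 => /eqP.
Qed.

Lemma continuous_sqnorm : continuous sqnorm.
Proof.
apply: (@continuous_big R 'I_m +%R 0 xpredT add_continuous) => j _ v.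
exact: continuous_comp (@coord_continuous R 1 m 0 j v) (@exprn_continuous R 2 _).
Qed.

Lemma enorm_le_sqnorm v w : enorm v <= enorm w -> sqnorm v <= sqnorm w.
Proof. by rewrite /enorm ler_sqrt // sqnorm_ge0. Qed.

Lemma sqnorm_le_of_enorm v e : 0 < e -> enorm v <= Num.sqrt e -> sqnorm v <= e.
Proof. by move=> e0; rewrite /enorm ler_sqrt // ltW. Qed.

Lemma sqnormDZ v w t :
  sqnorm (v + t *: w) = sqnorm v + 2 * t * dotr w v + t ^+ 2 * sqnorm w.
Proof.
rewrite /sqnorm /dotr mulr_sumr mulr_sumr -!big_split /=.
by apply: eq_bigr => j _; rewrite !mxE; ring.
Qed.

Lemma dotrZr u v t : dotr u (t *: v) = t * dotr u v.
Proof.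
by rewrite /dotr mulr_sumr; apply: eq_bigr => j _; rewrite mxE mulrCA.
Qed.

Lemma continuous_sqnormB (T : topologicalType)
    (g1 g2 : T -> 'rV[R]_m) c :
  {for c, continuous g1} -> {for c, continuous g2} ->
  {for c, continuous (fun t => sqnorm (g1 t - g2 t))}.
Proof.
move=> g1c g2c; have g12c : {for c, continuous (fun t => g1 t - g2 t)} by exact: cvgB.
exact: continuous_comp g12c (@continuous_sqnorm _).
Qed.

Lemma convex_set_comb Y y1 y2 t : convex_set Y -> Y y1 -> Y y2 -> 0 <= t -> t <= 1 ->
  Y (t *: y1 + (1 - t) *: y2).
Proof.
move=> cY Y1 Y2 t0 t1.
by have := cY y1 y2 (Itv01 t0 t1) (mem_set Y1) (mem_set Y2); rewrite inE.
Qed.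

Lemma projP Y v : Y !=set0 -> compact Y ->
  Y (Defs.proj Y v) /\ forall q, Y q -> enorm (Defs.proj Y v - v) <= enorm (q - v).
Proof.
move=> Y0 cY; rewrite /Defs.proj.
pose P := [set p | Y p /\ forall q, Y q -> enorm (p - v) <= enorm (q - v)].
suff : P (xget 0 P) by []; apply: xgetPex.
have cdist : continuous (fun q => sqnorm (q - v)).
  move=> q; have dv : {for q, continuous (fun q => q - v)}.
    exact: cvgB cvg_id (cvg_cst v).
  exact: continuous_comp dv (@continuous_sqnorm _).
have [c /set_mem Yc cmin] := compact_EVT_min Y0 cY (continuous_subspaceT cdist).
by exists c; split => // q Yq; rewrite /enorm ler_sqrt ?sqnorm_ge0 //; exact: cmin (mem_set Yq).
Qed.

(* If [P < 0] the quadratic is negative at [t = - P / (D - P)]. *)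
Lemma quadratic_ge0_slope (D P : R) : 0 <= D ->
  (forall t, 0 < t -> t <= 1 -> 0 <= t ^+ 2 * D + 2 * t * P) -> 0 <= P.
Proof.
move=> D0 Hq; rewrite leNgt; apply/negP => P0.
set t := - P / (D - P).
have DP0 : 0 < D - P by lra.
have t0 : 0 < t by rewrite divr_gt0 // oppr_gt0.
have t1 : t <= 1 by rewrite ler_pdivrMr // mul1r; lra.
have tDP : t * (D - P) = - P by rewrite /t mulfVK // gt_eqF.
have := Hq t t0 t1.
have -> : t ^+ 2 * D + 2 * t * P = t * (P * (1 + t)).
  have -> : t ^+ 2 * D = t * (t * (D - P) + t * P) by ring.
  by rewrite tDP; ring.
rewrite pmulr_rge0 //; have : P * (1 + t) < 0 by rewrite pmulr_llt0 //; lra.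
lra.
Qed.

Lemma min_dist_variational Y b w : convex_set Y -> Y b ->
  (forall q, Y q -> sqnorm (b - w) <= sqnorm (q - w)) ->
  forall q, Y q -> 0 <= dotr (q - b) (b - w).
Proof.
move=> cY Yb bmin q Yq; apply: quadratic_ge0_slope (sqnorm_ge0 (q - b)) _ => t t0 t1.
have := bmin _ (convex_set_comb cY Yq Yb (ltW t0) t1).
have -> : t *: q + (1 - t) *: b - w = (b - w) + t *: (q - b).
  by apply/matrixP => i j; rewrite !mxE; ring.
by rewrite sqnormDZ; lra.
Qed.

End EuclideanGeometry.

Lemma diff_le_of_secant (R : realType) (V : normedModType R) (g : V -> R) p v C :
  differentiable g p ->
  (forall t, 0 < t -> t <= 1 -> g (t *: v + p) <= g p + t * C) ->
  'd g p v <= C.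
Proof.
move=> dg secant.
have D := @diff_derivable _ _ _ g p v dg.
rewrite -deriveE //; apply: (cvgr_to_le (cvg_dnbhs_at_right D)).
near=> h.
have h0 : 0 < h by near: h; exact: nbhs_right_gt.
have h1 : h <= 1 by near: h; exact: nbhs_right_le.
rewrite /= -[leRHS](mulKf (lt0r_neq0 h0)) /GRing.scale /= ler_pM2l ?invr_gt0 //.
by rewrite lerBlDl secant.
Unshelve. all: by end_near.
Qed.

Section PartialGradient.
Variables (R : realType) (n m : nat) (f : 'rV[R]_n * 'rV[R]_m -> R).

Lemma diff_grad_y p (d : 'rV[R]_m) : 'd f p (0, d) = dotr d (grad_y f p).
Proof.
pose L y := 'd f p (0 : 'rV[R]_n, y).
have LD : {morph L : x y / x + y}.
  move=> x y; rewrite /L -linearD; congr ('d f p _).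
  by apply: injective_projections; rewrite /= ?addr0.
have L0 : L 0 = 0 by rewrite /L -[(0, 0)]/(0 : 'rV[R]_n * 'rV[R]_m) linear0.
rewrite -[LHS]/(L d) {1}(row_sum_delta d) (big_morph L LD L0) /dotr.
apply: eq_bigr => j _; rewrite /L /grad_y mxE -[_ * 'd f p _]/(_ *: _) -linearZ.
by congr ('d f p _); apply: injective_projections; rewrite /= ?scaler0.
Qed.

Lemma convex_min_of_grad_y a b q :
  differentiable f (a, b) ->
  (forall y1 y2 t, 0 <= t -> t <= 1 ->
      f (a, t *: y1 + (1 - t) *: y2) <= t * f (a, y1) + (1 - t) * f (a, y2)) ->
  0 <= dotr (q - b) (grad_y f (a, b)) ->
  f (a, b) <= f (a, q).
Proof.
move=> df fconv; rewrite -diff_grad_y => slope; rewrite -subr_ge0 (le_trans slope) //.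
apply: diff_le_of_secant => // t t0 t1.
have -> : t *: (0, q - b) + (a, b) = (a, t *: q + (1 - t) *: b).
  apply: injective_projections; rewrite /= ?scaler0 ?add0r //.
  by rewrite scalerBr scalerBl scale1r addrCA addrC.
by apply: le_trans (fconv _ _ _ (ltW t0) t1) _; lra.
Qed.

End PartialGradient.

Lemma cluster_ler0 (R : realType) (T : topologicalType) (F : set_system T)
    (h : T -> R) c :
  cluster F c -> {for c, continuous h} ->
  (forall e, 0 < e -> F [set t | h t <= e]) -> h c <= 0.
Proof.
move=> clc hc Fh; rewrite leNgt; apply/negP => hc0.
have near_hc : \forall t \near c, h c / 2 < h t by apply: (cvgr_gt _ hc); lra.
have Fhc : F [set t | h t <= h c / 2] by apply: Fh; rewrite divr_gt0.
by have [t [/= ht ht']] := clc _ _ Fhc near_hc; lra.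
Qed.

Lemma cluster_fmap (T U : topologicalType) (F : set_system T) (g : T -> U) c :
  cluster F c -> {for c, continuous g} -> cluster (g @ F) (g c).
Proof.
move=> clc gc A B FA gcB.
by have [t [At Bt]] := clc (g @^-1` A) _ FA (gc _ gcB); exists (g t).
Qed.

Lemma near_infty_comp (c : nat -> nat) (P : nat -> Prop) k :
  (forall N, (N <= c N)%N) -> (forall K, (k < K)%N -> P K) ->
  \forall N \near \oo, P (c N).
Proof. by move=> cN Pk; exists k.+1 => // N kN; apply: Pk (leq_trans kN (cN N)). Qed.

Lemma compact_cluster_seq (T : topologicalType) (A : set T) (u : nat -> T) :
  compact A -> (\forall N \near \oo, A (u N)) -> exists c, A c /\ cluster (u @ \oo) c.
Proof. by move=> cA uA; have [c [Ac clc]] := cA (u @ \oo) _ uA; exists c. Qed.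

Lemma compact_lbound (R : realType) (T : topologicalType) (A : set T) (g : T -> R) :
  compact A -> continuous g -> exists M, forall p, A p -> M <= g p.
Proof.
move=> cA gc; have [->|/set0P A0] := eqVneq A set0; first by exists 0.
have [p _ pmin] := compact_EVT_min A0 cA (continuous_subspaceT gc).
by exists (g p) => q Aq; apply: pmin; rewrite inE.
Qed.

Lemma inf_image_le (R : realType) (T : Type) (A : set T) (g : T -> R) M a :
  (forall y, A y -> M <= g y) -> A a -> inf (g @` A) <= g a.
Proof. by move=> Mlb Aa; apply: ge_inf; [exists M => _ [y Ay <-]; exact: Mlb | exists a]. Qed.

Lemma continuous_fst (U V : topologicalType) (p : U * V) : {for p, continuous fst}.
Proof. exact: cvg_fst. Qed.
Arguments continuous_fst {U V} p.

Lemma continuous_snd (U V : topologicalType) (p : U * V) : {for p, continuous snd}.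
Proof. exact: cvg_snd. Qed.
Arguments continuous_snd {U V} p.

Lemma continuous_fix_fst (U V W : topologicalType) (g : U * V -> W) x :
  continuous g -> continuous (fun y => g (x, y)).
Proof.
move=> gc y; have xy : {for y, continuous (fun y : V => (x, y))}.
  exact: cvg_pair (cvg_cst x) cvg_id.
exact: continuous_comp xy (gc _).
Qed.

Lemma continuous_fix_snd (U V W : topologicalType) (g : U * V -> W) y :
  continuous g -> continuous (fun p : U * V => g (p.1, y)).
Proof.
move=> gc p; have py : {for p, continuous (fun p : U * V => (p.1, y))}.
  exact: cvg_pair cvg_fst (cvg_cst y).
exact: continuous_comp py (gc _).
Qed.

Section LowerLevelLimit.
Variables (R : realType) (n m : nat) (f : 'rV[R]_n * 'rV[R]_m -> R).
Variables (X : set 'rV[R]_n) (Y : set 'rV[R]_m).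
Hypotheses (fc : continuous f) (fd : forall p, differentiable f p).
Hypothesis gyc : continuous (grad_y f).
Hypotheses (Xk : compact X) (Y0 : Y !=set0) (Yc : convex_set Y) (Yk : compact Y).
Hypothesis fconv : forall x, X x -> forall y1 y2 t, 0 <= t -> t <= 1 ->
  f (x, t *: y1 + (1 - t) *: y2) <= t * f (x, y1) + (1 - t) * f (x, y2).

Definition gap_unif_cvg (yk : nat -> 'rV[R]_n -> 'rV[R]_m -> 'rV[R]_m) :=
  forall eps : R, 0 < eps -> exists k : nat, (0 < k)%N /\
    forall K : nat, (k < K)%N -> forall x z, X x -> Y z ->
      f (x, yk K x z) - fstar f Y x <= eps.

Definition resid_unif_cvg (alpha : R) (yk : nat -> 'rV[R]_n -> 'rV[R]_m -> 'rV[R]_m) :=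
  forall eps : R, 0 < eps -> exists k : nat, (0 < k)%N /\
    forall K : nat, (k < K)%N -> forall x z, X x -> Y z ->
      enorm (resid f Y alpha x (yk K x z)) <= eps.

Definition cluster_in_Sol (u : nat -> 'rV[R]_n * 'rV[R]_m) :=
  exists a b, X a /\ Sol f Y a b /\ cluster (u @ \oo) (a, b).

Lemma fstar_le x y : Y y -> fstar f Y x <= f (x, y).
Proof.
have [M Mlb] := compact_lbound Yk (continuous_fix_fst (x := x) fc).
exact: inf_image_le Mlb.
Qed.

Lemma cluster_in_Sol_of_gap u :
  (\forall N \near \oo, (X `*` Y) (u N)) ->
  (forall e, 0 < e -> \forall N \near \oo, f (u N) - fstar f Y (u N).1 <= e) ->
  cluster_in_Sol u.
Proof.
move=> uXY gap.
have [[a b] [[/= Xa Yb] clab]] := compact_cluster_seq (compact_setX Xk Yk) uXY.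
exists a, b; split => //; split => //; split => // y Yy; rewrite -subr_le0.
apply: (@cluster_ler0 _ _ _ (fun p => f p - f (p.1, y)) _ clab).
  by apply: cvgB; [exact: fc | exact: continuous_fix_snd].
move=> e e0; apply: filterS (gap e e0) => N.
by rewrite /=; have := @fstar_le (u N).1 y Yy; lra.
Qed.

Lemma cluster_in_Sol_of_resid (al : R) u : 0 < al ->
  (\forall N \near \oo, (X `*` Y) (u N)) ->
  (forall e, 0 < e -> \forall N \near \oo, enorm (resid f Y al (u N).1 (u N).2) <= e) ->
  cluster_in_Sol u.
Proof.
move=> al0 uXY res.
pose w p := p.2 - al *: grad_y f p.
have wc : continuous w.
  move=> p; apply: cvgB; first exact: continuous_snd.
  by apply: cvgZ; [exact: cvg_cst | exact: gyc].
(* The projection is not known to be continuous, so we also cluster its values. *)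
pose v N := (u N, Defs.proj Y (w (u N))).
have vXYY : \forall N \near \oo, (X `*` Y `*` Y) (v N).
  by apply: filterS uXY => N uN; split => //; case: (projP (w (u N)) Y0 Yk).
have [[[a b] p] [[[/= Xa Yb] Yp] clv]] :=
  compact_cluster_seq (compact_setX (compact_setX Xk Yk) Yk) vXYY.
have clab : cluster (u @ \oo) (a, b) := cluster_fmap clv (continuous_fst _).
have c12 : continuous (fun t : ('rV[R]_n * 'rV[R]_m) * 'rV[R]_m => t.1.2).
  by move=> t; exact: continuous_comp (continuous_fst _) (continuous_snd _).
have bp : b = p.
  apply/subr0_eq/sqnorm_le0.
  apply: (@cluster_ler0 _ _ _ (fun t : 'rV_n * 'rV_m * 'rV_m => sqnorm (t.1.2 - t.2)) _ clv).
    exact: continuous_sqnormB (c12 _) (continuous_snd _).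
  move=> e e0; have e0' : 0 < Num.sqrt e by rewrite sqrtr_gt0.
  apply: filterS (res _ e0') => N resN /=.
  have -> : (u N).2 - Defs.proj Y (w (u N)) = resid f Y al (u N).1 (u N).2.
    by rewrite /w /resid; case: (u N).
  exact: sqnorm_le_of_enorm e0 resN.
have bmin q : Y q -> sqnorm (b - w (a, b)) <= sqnorm (q - w (a, b)).
  move=> Yq; rewrite -subr_le0 {1}bp.
  apply: (@cluster_ler0 _ _ _
    (fun t : 'rV_n * 'rV_m * 'rV_m => sqnorm (t.2 - w t.1) - sqnorm (q - w t.1)) _ clv).
    have w1c : continuous (fun t : ('rV[R]_n * 'rV[R]_m) * 'rV[R]_m => w t.1).
      by move=> t; exact: continuous_comp (continuous_fst _) (wc _).
    exact: cvgB (continuous_sqnormB (continuous_snd _) (w1c _))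
                (continuous_sqnormB (cvg_cst q) (w1c _)).
  move=> e e0; exists 0%N => // N _ /=; apply: le_trans (ltW e0); rewrite subr_le0.
  exact: enorm_le_sqnorm ((projP (w (u N)) Y0 Yk).2 q Yq).
exists a, b; split => //; split => //; split => // q Yq.
apply: convex_min_of_grad_y (fd _) (fconv Xa) _.
have := min_dist_variational Yc Yb bmin Yq.
have -> : b - w (a, b) = al *: grad_y f (a, b) by rewrite /w opprB addrC subrK.
by rewrite dotrZr pmulr_rge0.
Qed.

Lemma cluster_in_Sol_of_approx (yk : nat -> 'rV[R]_n -> 'rV[R]_m -> 'rV[R]_m) xs zs :
  (forall k x z, X x -> Y z -> Y (yk k x z)) ->
  (forall K, (1 <= K)%N -> X (xs K) /\ Y (zs K)) ->
  gap_unif_cvg yk \/ (exists al, 0 < al /\ resid_unif_cvg al yk) ->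
  forall c, (forall N, (N <= c N)%N) ->
  cluster_in_Sol (fun N => (xs (c N), yk (c N) (xs (c N)) (zs (c N)))).
Proof.
move=> ykY xzXY approx c cN.
pose uK K := (xs K, yk K (xs K) (zs K)).
have xzK k K : (0 < k)%N -> (k < K)%N -> X (xs K) /\ Y (zs K).
  by move=> k0 kK; apply: xzXY; exact: leq_trans k0 (ltnW kK).
have uXY : \forall N \near \oo, (X `*` Y) (uK (c N)).
  apply: (near_infty_comp (P := fun K => (X `*` Y) (uK K)) (k := 0) cN).
  by move=> K K0; have [XK YK] := xzXY K K0; split => //; exact: ykY.
case: approx => [gap | [al [al0 res]]].
  apply: cluster_in_Sol_of_gap uXY _ => e e0; have [k [k0 gapk]] := gap e e0.
  apply: (near_infty_comp (P := fun K => f (uK K) - fstar f Y (uK K).1 <= e) (k := k) cN).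
  by move=> K kK; have [XK YK] := xzK k K k0 kK; exact: gapk.
apply: cluster_in_Sol_of_resid al0 uXY _ => e e0; have [k [k0 resk]] := res e e0.
apply: (near_infty_comp (P := fun K => enorm (resid f Y al (uK K).1 (uK K).2) <= e) (k := k) cN).
by move=> K kK; have [XK YK] := xzK k K k0 kK; exact: resk.
Qed.

End LowerLevelLimit.

Lemma not_near_infty_subseq (P : nat -> Prop) :
  ~ (\forall N \near \oo, P N) -> exists c, (forall N, (N <= c N)%N) /\ forall N, ~ P (c N).
Proof.
move=> notP; have frequently N : exists K, (N <= K)%N /\ ~ P K.
  apply: contrapT => noK; apply: notP; exists N => // K /= NK.
  by apply: contrapT => PK; apply: noK; exists K.
have [c cP] := choice frequently.
by exists c; split => N; case: (cP N).
Qed.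

Section PenalizedProblem.
Variables (R : realType) (n m : nat) (F f : 'rV[R]_n * 'rV[R]_m -> R).
Variables (X : set 'rV[R]_n) (Y : set 'rV[R]_m).
Variables (yk : nat -> 'rV[R]_n -> 'rV[R]_m -> 'rV[R]_m) (xs : nat -> 'rV[R]_n) (zs : nat -> 'rV[R]_m).
Hypotheses (Fc : continuous F) (X0 : X !=set0) (Xk : compact X) (Yk : compact Y).
Hypothesis S0 : forall x, X x -> Sol f Y x !=set0.
Hypothesis ykS : forall k x z, X x -> Sol f Y x z -> yk k x z = z.
Let yK K := yk K (xs K) (zs K).
Hypothesis xzmin : forall K : nat, (1 <= K)%N ->
  X (xs K) /\ Y (zs K) /\ forall x z, X x -> Y z -> F (xs K, yK K) <= F (x, yk K x z).
Hypothesis xz_cluster : forall c, (forall N, (N <= c N)%N) ->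
  cluster_in_Sol f X Y (fun N => (xs (c N), yK (c N))).

Let Phi := inf [set varphi F f Y x | x in X].

Lemma varphi_le a b : Sol f Y a b -> varphi F f Y a <= F (a, b).
Proof.
have [M Mlb] := compact_lbound Yk (continuous_fix_fst (x := a) Fc).
by move=> Sab; apply: inf_image_le Sab => y [Yy _]; exact: Mlb.
Qed.

Lemma varphi_lbound : exists M, forall x, X x -> M <= varphi F f Y x.
Proof.
have [M Mlb] := compact_lbound (compact_setX Xk Yk) Fc.
exists M => x Xx; apply: lb_le_inf.
  by have [y Sy] := S0 Xx; exists (F (x, y)), y.
by move=> _ [y [Yy _] <-]; exact: Mlb.
Qed.

Lemma value_le_varphi K x : (1 <= K)%N -> X x -> F (xs K, yK K) <= varphi F f Y x.
Proof.
move=> K1 Xx; have [_ [_ Kmin]] := xzmin K1; apply: lb_le_inf.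
  by have [y Sy] := S0 Xx; exists (F (x, y)), y.
by move=> _ [y Sy <-]; rewrite -(ykS K Xx Sy); apply: Kmin => //; case: Sy.
Qed.

Lemma value_le_Phi K : (1 <= K)%N -> F (xs K, yK K) <= Phi.
Proof.
move=> K1; apply: lb_le_inf; first by have [x Xx] := X0; exists (varphi F f Y x), x.
by move=> _ [x Xx <-]; exact: value_le_varphi.
Qed.

Lemma Phi_le a b : X a -> Sol f Y a b -> Phi <= F (a, b).
Proof.
move=> Xa Sab; apply: le_trans (varphi_le Sab).
by have [M Mlb] := varphi_lbound; exact: inf_image_le Mlb Xa.
Qed.

Lemma inf_value_eq K : (1 <= K)%N ->
  inf [set F (x, yk K x z) | x in X & z in Y] = F (xs K, yK K).
Proof.
move=> K1; have [XK [YK Kmin]] := xzmin K1.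
have attained : [set F (x, yk K x z) | x in X & z in Y] (F (xs K, yK K)).
  by exists (xs K) => //; exists (zs K).
apply/le_anti/andP; split.
  by apply: ge_inf attained; exists (F (xs K, yK K)) => _ [x Xx [z Yz <-]]; exact: Kmin.
by apply: lb_le_inf; [exists (F (xs K, yK K)) | move=> _ [x Xx [z Yz <-]]; exact: Kmin].
Qed.

Lemma limit_point_argmin xbar (sigma : nat -> nat) :
  (forall k, (sigma k < sigma k.+1)%N) -> (xs \o sigma) @ \oo --> xbar ->
  X xbar /\ forall x, X x -> varphi F f Y xbar <= varphi F f Y x.
Proof.
move=> sigma_incr xs_cvg.
have sigmaN N : (N <= sigma N)%N.
  by elim: N => // N IH; exact: leq_ltn_trans IH (sigma_incr N).
have [a [b [Xa [Sab clab]]]] := xz_cluster sigmaN.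
have -> : xbar = a.
  exact: norm_hausdorff (cvg_cluster xs_cvg (cluster_fmap clab (continuous_fst _))).
split=> // x Xx; apply: le_trans (varphi_le Sab) _; rewrite -subr_le0.
apply: (@cluster_ler0 _ _ _ (fun p => F p - varphi F f Y x) _ clab).
  by apply: cvgB; [exact: Fc | exact: cvg_cst].
move=> e e0; exists 1%N => // N N1 /=; apply: le_trans (ltW e0); rewrite subr_le0.
exact: value_le_varphi (leq_trans N1 (sigmaN N)) Xx.
Qed.

Lemma Phi_le_value_near e : 0 < e -> \forall K \near \oo, Phi - e <= F (xs K, yK K).
Proof.
move=> e0; apply: contrapT => /not_near_infty_subseq [c [cN below]].
have [a [b [Xa [Sab clab]]]] := xz_cluster cN.
have : F (a, b) - (Phi - e) <= 0.
  apply: (@cluster_ler0 _ _ _ (fun p => F p - (Phi - e)) _ clab).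
    by apply: cvgB; [exact: Fc | exact: cvg_cst].
  move=> e' e'0; exists 0%N => // N _ /=.
  by move: (below N) => /negP; rewrite -ltNge; lra.
by have := Phi_le Xa Sab; lra.
Qed.

Lemma value_cvg :
  (fun K : nat => inf [set F (x, yk K x z) | x in X & z in Y]) @ \oo --> Phi.
Proof.
apply/cvgrPdist_le => e e0; near=> K.
have K1 : (1 <= K)%N by near: K; exists 1.
rewrite inf_value_eq // ger0_norm ?subr_ge0 ?value_le_Phi //.
suff : Phi - e <= F (xs K, yK K) by lra.
by near: K; exact: Phi_le_value_near.
Unshelve. all: by end_near.
Qed.

End PenalizedProblem.

Theorem theorem3p3 (R : realType) (n m : nat)
  (F f : 'rV[R]_n * 'rV[R]_m -> R) (X : set 'rV[R]_n) (Y : set 'rV[R]_m)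
  (Lf : R)
  (* (i) continuity *)
  (HFc : continuous F) (Hfc : continuous f)
  (* (ii) differentiability, continuous gradient, Lipschitz y-gradient *)
  (Hfd : forall p, differentiable f p)
  (Hgc : continuous (grad f))
  (HLf : 0 < Lf)
  (HLip : forall x, X x -> forall y1 y2,
      enorm (grad_y f (x, y1) - grad_y f (x, y2)) <= Lf * enorm (y1 - y2))
  (* (iii) nonempty convex compact sets *)
  (HX0 : X !=set0) (HXc : convex_set X) (HXk : compact X)
  (HY0 : Y !=set0) (HYc : convex_set Y) (HYk : compact Y)
  (* (iv) nonempty lower-level solution sets *)
  (HS : forall x, X x -> Sol f Y x !=set0)
  (* additional: convexity of f(x, .) *)
  (Hconv : forall x, X x -> forall y1 y2 t, 0 <= t -> t <= 1 ->
      f (x, t *: y1 + (1 - t) *: y2) <= t * f (x, y1) + (1 - t) * f (x, y2))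
  (* the maps y_k *)
  (yk : nat -> 'rV[R]_n -> 'rV[R]_m -> 'rV[R]_m)
  (HykY : forall k x z, X x -> Y z -> Y (yk k x z))
  (HykS : forall k x z, X x -> Sol f Y x z -> yk k x z = z)
  (Hab :
     (forall eps : R, 0 < eps -> exists k : nat, (0 < k)%N /\
        forall K : nat, (k < K)%N -> forall x z, X x -> Y z ->
          f (x, yk K x z) - fstar f Y x <= eps)
     \/
     (exists alpha : R, 0 < alpha /\
        forall eps : R, 0 < eps -> exists k : nat, (0 < k)%N /\
          forall K : nat, (k < K)%N -> forall x z, X x -> Y z ->
            enorm (resid f Y alpha x (yk K x z)) <= eps))
  (* minimisers (x_K, z_K) of phi_K(x,z) = F(x, y_K(x,z)) over X x Y, K >= 1 *)
  (xs : nat -> 'rV[R]_n) (zs : nat -> 'rV[R]_m)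
  (Hmin : forall K : nat, (1 <= K)%N ->
      X (xs K) /\ Y (zs K) /\
      forall x z, X x -> Y z ->
        F (xs K, yk K (xs K) (zs K)) <= F (x, yk K x z)) :
  (* (1) every limit point of (x_K) minimises varphi over X *)
  (forall (xbar : 'rV[R]_n) (sigma : nat -> nat),
      (forall k, (sigma k < sigma k.+1)%N) ->
      (xs \o sigma) @ \oo --> xbar ->
      X xbar /\ forall x, X x -> varphi F f Y xbar <= varphi F f Y x)
  /\
  (* (2) convergence of optimal values *)
  ((fun K : nat => inf [set F (x, yk K x z) | x in X & z in Y]) @ \oo
     --> inf [set varphi F f Y x | x in X]).
Proof.
have xzXY K : (1 <= K)%N -> X (xs K) /\ Y (zs K) by case/Hmin => XK [YK _].
have gyc : continuous (grad_y f).
  by move=> p; exact: continuous_comp (Hgc p) (continuous_snd _).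
have xz_cluster :=
  cluster_in_Sol_of_approx Hfc Hfd gyc HXk HY0 HYc HYk Hconv HykY xzXY Hab.
split.
  exact: limit_point_argmin HFc HYk HS HykS Hmin xz_cluster.
exact: value_cvg HFc HX0 HXk HYk HS HykS Hmin xz_cluster.
Qed.
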